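(* Let $\sigma$ be a full-rank $d$-dimensional quantum state with eigendecomposition $\sigma=\sum_{i=1}^dq(i)\,|e_i\rangle\langle e_i|$ and minimum eigenvalue $\gamma=\min_iq(i)$. Let $\rho_1,\dots,\rho_T$ ($T\ge2$) be $d$-dimensional states, $\varrho=\rho_1\otimes\cdots\otimes\rho_T$, $\rho=\frac1T\sum_t\rho_t$, and $\mu=D_{\chi^2}(\rho\,\|\,\sigma)$. Define the observable $C=\sum_{i,j=1}^d\frac{|e_je_i\rangle\langle e_ie_j|}{q(i,j)}$ on $(\mathbb C^d)^{\otimes2}$ with $q(i,j)=\frac{q(i)+q(j)}2$, let $C_{st}$ denote $C$ applied to the $s$th and $t$th tensor components of $(\mathbb C^d)^{\otimes T}$, and let $M=\frac{T-1}T\Big(\binom T2^{-1}\sum_{1\le s<t\le T}C_{st}-I\Big)$. Then $$\big|\mathbb E_\varrho[M]-\mu\big|\le\sqrt{\frac d{\gamma T}}\sqrt\mu+\frac{d-1}T.$$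
   Context: $\mathbb E_\varrho[Y]=\mathrm{Tr}[\varrho Y]$. Bures $\chi^2$-divergence: writing $\sigma=U\,\mathrm{diag}(q_1,\dots,q_d)U^\dagger$ and $\rho'=U^\dagger\rho U$, $D_{\chi^2}(\rho\,\|\,\sigma)=\sum_{i,j}\frac{2}{q_i+q_j}|\rho'_{ij}|^2-1$. *)

From HB Require Import structures.
From mathcomp Require Import all_boot all_order all_algebra.
From mathcomp Require Import complex sesquilinear spectral.
From mathcomp Require Import reals.
Set Implicit Arguments. Unset Strict Implicit. Unset Printing Implicit Defensive.
Import Order.TTheory GRing.Theory Num.Theory.
Local Open Scope ring_scope.
Local Open Scope sesquilinear_scope.

Section QuantumDefs.
Variable R : realType.
Local Notation C := R[i].

Definition adjmx m n (A : 'M[C]_(m, n)) : 'M[C]_(n, m) := A ^t*.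

Definition is_state n (A : 'M[C]_n) : Prop :=
  [/\ adjmx A = A,
      (forall v : 'cV[C]_n, 0 <= (adjmx v *m A *m v) 0 0) & \tr A = 1].

(* Bures chi^2 divergence, computed in the eigenbasis (columns of U) of
   sigma = U diag(q) U^dagger:  sum_{i,j} 2/(q_i+q_j) |rho'_{ij}|^2 - 1,
   with rho' = U^dagger rho U. *)
Definition chi2_div d (U : 'M[C]_d) (q : 'I_d -> R) (rho : 'M[C]_d) : R :=
  let rho' := adjmx U *m rho *m U in
  \sum_(i < d) \sum_(j < d) 2 / (q i + q j) * (ComplexField.Normc.normc (rho' i j)) ^+ 2 - 1.

(* Computational basis of (C^d)^{(x)T}: indexed by T-tuples of 'I_d.
   Operators on (C^d)^{(x)T} are given by their matrix entries <x|A|y>. *)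
Definition tidx d T := {ffun 'I_T -> 'I_d}.
Definition top d T := tidx d T -> tidx d T -> C.

Definition tensor_state d T (rho : 'I_T -> 'M[C]_d) : top d T :=
  fun x y => \prod_(t < T) rho t (x t) (y t).

Definition expect d T (vr Y : top d T) : C :=
  \sum_(x : tidx d T) \sum_(y : tidx d T) vr x y * Y y x.

(* entries of C = sum_{i,j} |e_j e_i><e_i e_j| / q(i,j) on (C^d)^{(x)2},
   q(i,j) = (q i + q j)/2, e_i = i-th column of U:
   <a b| C |c e> *)
Definition Cop2 d (U : 'M[C]_d) (q : 'I_d -> R) (a b c e : 'I_d) : C :=
  \sum_(i < d) \sum_(j < d)
     U a j * U b i * Num.conj (U c i) * Num.conj (U e j) / (((q i + q j) / 2)%:C)%C.

(* C acting on the s-th and t-th tensor factors (identity elsewhere) *)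
Definition Cst d T (U : 'M[C]_d) (q : 'I_d -> R) (s t : 'I_T) : top d T :=
  fun x y => Cop2 U q (x s) (x t) (y s) (y t) *
             (if [forall r, ((r != s) && (r != t)) ==> (x r == y r)] then 1 else 0).

Definition idop d T : top d T := fun x y => if x == y then 1 else 0.

Definition Mop d T (U : 'M[C]_d) (q : 'I_d -> R) : top d T :=
  fun x y => ((T%:R - 1) / T%:R) *
    ((('C(T, 2))%:R)^-1 * (\sum_(s < T) \sum_(t < T | (s < t)%N) Cst U q s t x y)
     - idop x y).

End QuantumDefs.

From HB Require Import structures.
From mathcomp Require Import all_boot all_order all_algebra.
From mathcomp Require Import complex sesquilinear spectral reals.
From mathcomp Require Import ring lra.
Import Order.TTheory GRing.Theory Num.Theory.
Set Implicit Arguments. Unset Strict Implicit. Unset Printing Implicit Defensive.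
Local Open Scope ring_scope.

(* Write A' = U^dagger A U and w(i,j) = 2 / (q(i) + q(j)).  Since the factors of varrho
   other than s and t have trace 1, E[C_st] = B(rho_s, rho_t) with the symmetric bilinear
   form B(A, B) = sum_{i,j} w(i,j) A'(i,j) B'(j,i), and B(rhobar, rhobar) = mu + 1.
   Averaging over the pairs s < t turns E[M] - mu into 1/T - (sum_t N_t) / T^2, where
   N_t = B(rho_t, rho_t).  With D_t(i) = rho_t'(i,i), Cauchy-Schwarz gives
   N_t >= sum_i D_t(i)^2 / q(i) >= 1, while |rho_t'(i,j)|^2 <= D_t(i) D_t(j) and
   w(i,j) <= (1/q(i) + 1/q(j)) / 2 give N_t <= sum_i D_t(i) / q(i).  So the deviation is
   at most (sum_i Dbar(i) / q(i) - 1) / T, and Cauchy-Schwarz with weights 1/q(i) <= 1/gamma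
   bounds sum_i Dbar(i) / q(i) - d by sqrt(d / gamma) sqrt(sum_i Dbar(i)^2 / q(i) - 1),
   which is at most sqrt(d / gamma) sqrt(mu). *)

Lemma cauchy_schwarz_weighted (R : realFieldType) n (w z : 'I_n -> R) :
  (forall i, 0 <= w i) ->
  (\sum_i w i * z i) ^+ 2 <= (\sum_i w i) * \sum_i w i * z i ^+ 2.
Proof.
move=> w_ge0; set W := \sum_i w i; set S := \sum_i w i * z i.
have [W0 | W_neq0] := eqVneq W 0.
  have w0 i : w i = 0 by apply: (psumr_eq0P (fun i _ => w_ge0 i) W0).
  have -> : S = 0 by rewrite /S big1 // => i _; rewrite w0 mul0r.
  by rewrite W0 expr0n mul0r.
have W_gt0 : 0 < W by rewrite lt0r W_neq0 sumr_ge0.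
pose m := S / W.
have var_ge0 : 0 <= \sum_i w i * (z i - m) ^+ 2.
  by apply: sumr_ge0 => i _; rewrite mulr_ge0 ?sqr_ge0.
have var_eq : \sum_i w i * (z i - m) ^+ 2 = \sum_i w i * z i ^+ 2 - S ^+ 2 / W.
  transitivity (\sum_i (w i * z i ^+ 2 - (2 * m) * (w i * z i) + m ^+ 2 * w i)).
    by apply: eq_bigr => i _; ring.
  rewrite big_split sumrB -!mulr_sumr /= -/S -/W /m; field.
  exact: W_neq0.
by rewrite var_eq subr_ge0 ler_pdivrMr // mulrC in var_ge0.
Qed.

Lemma sqr_sum_le_sum_div (R : realFieldType) n (q x : 'I_n -> R) :
  (forall i, 0 < q i) ->
  (\sum_i x i) ^+ 2 <= (\sum_i q i) * \sum_i x i ^+ 2 / q i.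
Proof.
move=> q_gt0; have q_neq0 i : q i != 0 by rewrite gt_eqF.
have := cauchy_schwarz_weighted (fun i => x i / q i) (fun i => ltW (q_gt0 i)).
congr (_ ^+ 2 <= _ * _); apply: eq_bigr => i _; field; exact: q_neq0.
Qed.

Lemma quad_ge0_minor (R : realFieldType) (p r n : R) : 0 <= p -> 0 <= r -> 0 <= n ->
  (forall x y, 0 <= x * x * p + 2 * x * y * n + y * y * n * r) -> n <= p * r.
Proof.
move=> p_ge0 r_ge0 n_ge0 quad_ge0.
have [p0 | p_neq0] := eqVneq p 0.
  by have := quad_ge0 (r + 1) (-1); rewrite p0; nra.
have p_gt0 : 0 < p by rewrite lt0r p_neq0.
have := quad_ge0 n (- p).
have -> : n * n * p + 2 * n * - p * n + - p * - p * n * r = p * (n * (p * r - n)) by ring.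
rewrite pmulr_rge0 //; have [-> | n_neq0] := eqVneq n 0; first by move=> _; rewrite mulr_ge0.
have n_gt0 : 0 < n by rewrite lt0r n_neq0.
by rewrite pmulr_rge0 // subr_ge0.
Qed.

Lemma sum_delta (V : pzSemiRingType) n (i : 'I_n) (F : 'I_n -> V) :
  \sum_k (k == i)%:R * F k = F i.
Proof. by under eq_bigr do rewrite mulr_natl mulrb; rewrite -big_mkcond big_pred1_eq. Qed.

Lemma sum_ltn_pairs (V : zmodType) T (F : 'I_T -> 'I_T -> V) :
  (forall s t, F s t = F t s) ->
  (\sum_(s < T) \sum_(t < T | (s < t)%N) F s t) *+ 2
    = \sum_s \sum_t F s t - \sum_s F s s.
Proof.
move=> F_sym; apply/eqP; rewrite eq_sym subr_eq; apply/eqP.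
have split_row s : \sum_t F s t = \sum_(t < T | (s < t)%N) F s t
    + \sum_(t < T | (t < s)%N) F s t + F s s.
  rewrite (bigID (fun t : 'I_T => (s < t)%N)) /= [X in _ + X](bigD1 s) ?ltnn //=.
  rewrite [F s s + _]addrC addrA; congr (_ + _ + _).
  by apply: eq_bigl => t; rewrite -val_eqE /= -leqNgt; case: ltngtP.
rewrite (eq_bigr _ (fun s _ => split_row s)) !big_split /= mulr2n; congr (_ + _ + _).
under eq_bigr do rewrite big_mkcond; under [RHS]eq_bigr do rewrite big_mkcond.
by rewrite exchange_big /=; apply: eq_bigr => s _; apply: eq_bigr => t _; rewrite F_sym.
Qed.

Lemma bin2_natr (F : pzRingType) n : ('C(n, 2))%:R *+ 2 = n%:R * (n%:R - 1) :> F.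
Proof.
case: n => [|n]; first by rewrite bin0n mul0r mul0rn.
by rewrite -mulr_natr -natrM bin_ffact ffactnS ffactn1 natrM mulrSr addrK.
Qed.

Lemma pair_average_coef (F : numFieldType) T (S x y : F) : (2 <= T)%N ->
  S *+ 2 = T%:R ^+ 2 * x - y ->
  (T%:R - 1) / T%:R * (('C(T, 2))%:R^-1 * S - 1) = x - 1 + (T%:R^-1 - y / T%:R ^+ 2).
Proof.
move=> T_ge2 S2.
have T_neq0 : T%:R != 0 :> F by rewrite pnatr_eq0 -lt0n (leq_trans _ T_ge2).
have T1_neq0 : T%:R - 1 != 0 :> F by rewrite subr_eq0 pnatr_eq1 gtn_eqF.
have SE : S = (T%:R ^+ 2 * x - y) / 2 by rewrite -S2 mulr2n; field.
have binE : ('C(T, 2))%:R = T%:R * (T%:R - 1) / 2 :> F.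
  by rewrite -bin2_natr mulr2n; field.
by rewrite SE binE; field; rewrite T_neq0 T1_neq0.
Qed.

Definition bures_weight (F : fieldType) n (q : 'I_n -> F) (i j : 'I_n) : F :=
  2 / (q i + q j).

Section BuresWeight.
Variables (R : realFieldType) (n : nat) (q : 'I_n -> R).
Hypothesis q_gt0 : forall i, 0 < q i.

Lemma bures_weightC i j : bures_weight q i j = bures_weight q j i.
Proof. by rewrite /bures_weight addrC. Qed.

Lemma bures_weight_ge0 i j : 0 <= bures_weight q i j.
Proof. by rewrite divr_ge0 // ltW // addr_gt0. Qed.

Lemma bures_weight_diag i : bures_weight q i i = (q i)^-1.
Proof.
have qi := q_gt0 i; have qii : 0 < q i + q i by rewrite addr_gt0.
by rewrite /bures_weight; field; rewrite !gt_eqF.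
Qed.

Lemma bures_weight_le_mean i j : bures_weight q i j <= ((q i)^-1 + (q j)^-1) / 2.
Proof.
have qi := q_gt0 i; have qj := q_gt0 j; have qij : 0 < q i + q j by rewrite addr_gt0.
rewrite /bures_weight ler_pdivrMr // mulrC mulrA ler_pdivlMr //.
have -> : (q i + q j) * ((q i)^-1 + (q j)^-1) = 2 * 2 + (q i - q j) ^+ 2 / (q i * q j).
  by field; rewrite !gt_eqF.
by rewrite lerDl divr_ge0 ?sqr_ge0 // mulr_ge0 // ltW.
Qed.

Lemma sum_bures_weight_le (D : 'I_n -> R) (m : 'I_n -> 'I_n -> R) :
  \sum_i D i = 1 -> (forall i j, 0 <= m i j <= D i * D j) ->
  \sum_i \sum_j bures_weight q i j * m i j <= \sum_i D i / q i.
Proof.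
move=> sum_D m_bound.
apply: (@le_trans _ _ (\sum_i \sum_j ((q i)^-1 + (q j)^-1) / 2 * (D i * D j))).
  apply: ler_sum => i _; apply: ler_sum => j _; have /andP [m_ge0 m_le] := m_bound i j.
  by apply: ler_pM; rewrite ?bures_weight_ge0 ?bures_weight_le_mean.
pose Y i j := (q i)^-1 * D i * D j.
have -> : \sum_i \sum_j ((q i)^-1 + (q j)^-1) / 2 * (D i * D j)
    = (\sum_i \sum_j Y i j + \sum_i \sum_j Y j i) / 2.
  rewrite -big_split /= mulr_suml; apply: eq_bigr => i _.
  by rewrite -big_split /= mulr_suml; apply: eq_bigr => j _; rewrite /Y; ring.
have sum_Y : \sum_i \sum_j Y i j = \sum_i D i / q i.
  by apply: eq_bigr => i _; rewrite /Y -mulr_sumr sum_D mulr1 mulrC.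
have half (x : R) : (x + x) / 2 = x by field.
by rewrite [X in _ + X]exchange_big /= sum_Y half.
Qed.

End BuresWeight.

Section ReferenceDistribution.
Variables (R : rcfType) (d : nat) (q : 'I_d -> R) (gamma : R).
Hypotheses (gamma_gt0 : 0 < gamma) (gamma_le : forall i, gamma <= q i)
           (sum_q : \sum_i q i = 1).

Let q_gt0 i : 0 < q i := lt_le_trans gamma_gt0 (gamma_le i).
Let q_neq0 i : q i != 0. Proof. by rewrite gt_eqF. Qed.

Lemma sum_sqr_div_ge1 (x : 'I_d -> R) : \sum_i x i = 1 -> 1 <= \sum_i x i ^+ 2 / q i.
Proof.
by move=> sum_x; have := sqr_sum_le_sum_div x q_gt0; rewrite sum_x sum_q expr1n mul1r.
Qed.

Lemma sum_div_le (x : 'I_d -> R) : \sum_i x i = 1 ->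
  \sum_i x i / q i <= d%:R + Num.sqrt (d%:R / gamma) * Num.sqrt (\sum_i x i ^+ 2 / q i - 1).
Proof.
move=> sum_x; set S := \sum_i (q i)^-1 * (x i - q i).
have dE : d%:R = \sum_(i < d) 1 :> R by rewrite sumr_const card_ord.
have -> : \sum_i x i / q i = d%:R + S.
  rewrite dE -big_split; apply: eq_bigr => i _ /=.
  by field; exact: q_neq0.
have dg_ge0 : 0 <= d%:R / gamma by rewrite divr_ge0 ?ler0n ?ltW.
rewrite lerD2l -sqrtrM //.
have sum_inv : \sum_i (q i)^-1 <= d%:R / gamma.
  rewrite dE mulr_suml; apply: ler_sum => i _; rewrite mul1r.
  by rewrite lef_pV2 ?posrE.
have var_eq : \sum_i (q i)^-1 * (x i - q i) ^+ 2 = \sum_i x i ^+ 2 / q i - 1.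
  transitivity (\sum_i (x i ^+ 2 / q i - 2 * x i + q i)).
    by apply: eq_bigr => i _; field; exact: q_neq0.
  by rewrite big_split sumrB /= -mulr_sumr sum_x sum_q; ring.
have S2 : S ^+ 2 <= d%:R / gamma * (\sum_i x i ^+ 2 / q i - 1).
  apply: le_trans (cauchy_schwarz_weighted _ _) _ => [i|].
    by rewrite invr_ge0 ltW.
  rewrite var_eq ler_wpM2r // ?subr_ge0 ?sum_sqr_div_ge1 //.
apply: le_trans (ler_norm S) _; rewrite -sqrtr_sqr ler_sqrt //.
by rewrite mulr_ge0 // subr_ge0 sum_sqr_div_ge1.
Qed.

Lemma mean_deviation_bound T (D : 'I_T -> 'I_d -> R) (N : 'I_T -> R) (mu : R) :
  (0 < T)%N -> (forall t, \sum_i D t i = 1) ->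
  (forall t, \sum_i D t i ^+ 2 / q i <= N t) ->
  (forall t, N t <= \sum_i D t i / q i) ->
  \sum_i (T%:R^-1 * \sum_t D t i) ^+ 2 / q i <= mu + 1 ->
  `|T%:R^-1 - (\sum_t N t) / T%:R ^+ 2|
    <= Num.sqrt (d%:R / (gamma * T%:R)) * Num.sqrt mu + (d%:R - 1) / T%:R.
Proof.
move=> T_gt0 sum_D N_ge N_le mu_ge.
have Tr_gt0 : 0 < T%:R :> R by rewrite ltr0n.
have Tr_neq0 : T%:R != 0 :> R by rewrite gt_eqF.
pose Dm i := T%:R^-1 * \sum_t D t i.
have sum_Dm : \sum_i Dm i = 1.
  rewrite -mulr_sumr exchange_big /= (eq_bigr _ (fun t _ => sum_D t)).
  by rewrite sumr_const card_ord -mulr_natl mulr1 mulVf.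
have sum_N_ge : T%:R <= \sum_t N t.
  have : \sum_(t < T) 1 <= \sum_t N t.
    by apply: ler_sum => t _; apply: le_trans (sum_sqr_div_ge1 (sum_D t)) (N_ge t).
  by rewrite sumr_const card_ord.
have sum_N_le : (\sum_t N t) / T%:R <= \sum_i Dm i / q i.
  rewrite ler_pdivrMr // mulr_suml; apply: le_trans (ler_sum _ (fun t _ => N_le t)) _.
  rewrite exchange_big; apply: ler_sum => i _ /=.
  by rewrite -mulr_suml /Dm [_ * T%:R]mulrC !mulrA mulfV ?mul1r.
have mu_ge0 : 0 <= mu.
  by have := le_trans (sum_sqr_div_ge1 sum_Dm) mu_ge; rewrite lerDr.
have Dm_le : \sum_i Dm i / q i <= d%:R + Num.sqrt (d%:R / gamma) * Num.sqrt mu.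
  apply: le_trans (sum_div_le sum_Dm) _.
  by rewrite lerD2l ler_wpM2l ?sqrtr_ge0 // ler_sqrt // lerBlDr.
have dg_ge0 : 0 <= d%:R / gamma by rewrite divr_ge0 ?ler0n ?ltW.
have sqrt_le : Num.sqrt (d%:R / gamma) / T%:R <= Num.sqrt (d%:R / (gamma * T%:R)).
  rewrite invfM mulrA (sqrtrM _ dg_ge0); apply: ler_wpM2l; first exact: sqrtr_ge0.
  have Tinv_ge0 : 0 <= T%:R^-1 :> R by rewrite invr_ge0 ltW.
  rewrite -{1}(ger0_norm Tinv_ge0) -sqrtr_sqr ler_sqrt // expr2 ler_piMr //.
  by rewrite invf_le1 // ler1n.
rewrite ler0_norm; last first.
  by rewrite subr_le0 ler_pdivlMr ?exprn_gt0 // expr2 mulrA mulVf ?mul1r.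
have -> : - (T%:R^-1 - (\sum_t N t) / T%:R ^+ 2) = ((\sum_t N t) / T%:R - 1) / T%:R.
  by field.
apply: (@le_trans _ _ ((Num.sqrt (d%:R / gamma) * Num.sqrt mu + (d%:R - 1)) / T%:R)).
  rewrite ler_pM2r ?invr_gt0 //; lra.
by rewrite mulrDl lerD2r mulrAC ler_wpM2r ?sqrtr_ge0.
Qed.

End ReferenceDistribution.

Section Quantum.
Variable R : realType.
Local Notation C := R[i].
Local Notation normc := (@ComplexField.Normc.normc R).

Lemma normcE (z : C) : (normc z)%:C%C = `|z|.
Proof. by case: z => a b; rewrite normc_def. Qed.

Lemma normc_sqrE (z : C) : (normc z ^+ 2)%:C%C = z * z^*.
Proof. by rewrite rmorphXn /= normcE normCK. Qed.

Lemma normc2 (z : C) : normc z ^+ 2 = complex.Re z ^+ 2 + complex.Im z ^+ 2.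
Proof. by case: z => a b /=; rewrite sqr_sqrtr // addr_ge0 ?sqr_ge0. Qed.

Lemma normc_real (x : R) : normc x%:C%C = `|x|.
Proof. by rewrite /= expr0n addr0 sqrtr_sqr. Qed.

Lemma conjC_real (x : R) : (x%:C%C)^* = x%:C%C :> C.
Proof. exact: conjc_real. Qed.

Lemma complex_ge0E (z : C) : 0 <= z -> z = (complex.Re z)%:C%C /\ 0 <= complex.Re z.
Proof.
by move=> z_ge0; rewrite RRe_real ?ger0_real //; move: z_ge0; rewrite lecE => /andP [].
Qed.

Lemma Re_sum I (r : seq I) (P : pred I) (F : I -> C) :
  complex.Re (\sum_(i <- r | P i) F i) = \sum_(i <- r | P i) complex.Re (F i).
Proof. exact: raddf_sum. Qed.

Lemma Re_realM (x : R) (z : C) : complex.Re (x%:C%C * z) = x * complex.Re z.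
Proof. by case: z => a b /=; rewrite mul0r subr0. Qed.

Lemma adjmxM m n p (A : 'M[C]_(m, n)) (B : 'M[C]_(n, p)) :
  adjmx (A *m B) = adjmx B *m adjmx A.
Proof. by rewrite /adjmx trmx_mul map_mxM. Qed.

Lemma adjmxK m n (A : 'M[C]_(m, n)) : adjmx (adjmx A) = A.
Proof. exact: trmxCK. Qed.

Lemma adjmxE m n (A : 'M[C]_(m, n)) i j : adjmx A i j = (A j i)^*.
Proof. by rewrite !mxE. Qed.

Lemma unitary_adjmxK d (U : 'M[C]_d) : U \is unitarymx -> adjmx U *m U = 1%:M.
Proof. by move/unitarymxP; apply: mulmx1C. Qed.

Lemma adjmx_mean d T (A : 'I_T -> 'M[C]_d) : (forall t, adjmx (A t) = A t) ->
  adjmx (T%:R^-1 *: \sum_t A t) = T%:R^-1 *: \sum_t A t.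
Proof.
move=> herm; apply/matrixP => i j; rewrite adjmxE !mxE !summxE rmorphM rmorph_sum.
rewrite fmorphV rmorph_nat; congr (_ * _); apply: eq_bigr => t _.
by rewrite /= -adjmxE herm.
Qed.

Definition psdmx n (A : 'M[C]_n) := forall v : 'cV[C]_n, 0 <= (adjmx v *m A *m v) 0 0.

Lemma quad_form2 n (P : 'M[C]_n) i j (a b : C) :
  let v := \col_k ((k == i)%:R * a + (k == j)%:R * b) in
  (adjmx v *m P *m v) 0 0
    = a^* * a * P i i + a^* * b * P i j + b^* * a * P j i + b^* * b * P j j.
Proof.
move=> v; rewrite mxE.
transitivity (\sum_l (a^* * P i l + b^* * P j l) * ((l == i)%:R * a + (l == j)%:R * b)).
  apply: eq_bigr => l _; rewrite !mxE; congr (_ * _).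
  transitivity (\sum_k ((k == i)%:R * (a^* * P k l) + (k == j)%:R * (b^* * P k l))).
    apply: eq_bigr => k _; rewrite adjmxE mxE rmorphD !rmorphM /= !conjC_nat; ring.
  by rewrite big_split /= !sum_delta.
transitivity (\sum_l ((l == i)%:R * ((a^* * P i l + b^* * P j l) * a)
                     + (l == j)%:R * ((a^* * P i l + b^* * P j l) * b))).
  by apply: eq_bigr => l _; ring.
by rewrite big_split /= !sum_delta; ring.
Qed.

Section Psd.
Variables (n : nat) (P : 'M[C]_n).
Hypothesis P_psd : psdmx P.

Lemma psdmx_diag i : P i i = (complex.Re (P i i))%:C%C /\ 0 <= complex.Re (P i i).
Proof.
apply: complex_ge0E; have := P_psd (\col_k ((k == i)%:R * 1 + (k == i)%:R * 0)).
by rewrite quad_form2 conjC1 conjC0 !mulr0 !mul0r !mul1r !addr0.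
Qed.

Lemma psdmx_minor i j : adjmx P = P ->
  normc (P i j) ^+ 2 <= complex.Re (P i i) * complex.Re (P j j).
Proof.
move=> herm; have [Pii p_ge0] := psdmx_diag i; have [Pjj r_ge0] := psdmx_diag j.
set p := complex.Re (P i i) in Pii p_ge0 *; set r := complex.Re (P j j) in Pjj r_ge0 *.
have Pji : P j i = (P i j)^* by rewrite -{1}herm adjmxE.
apply: quad_ge0_minor => // [|x y]; first exact: sqr_ge0.
pose v := \col_k ((k == i)%:R * x%:C%C + (k == j)%:R * (y%:C%C * (P i j)^*)).
have -> : x * x * p + 2 * x * y * normc (P i j) ^+ 2 + y * y * normc (P i j) ^+ 2 * r
    = complex.Re ((adjmx v *m P *m v) 0 0).
  rewrite quad_form2 Pji rmorphM /= !conjC_real conjCK [P i i]Pii [P j j]Pjj.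
  set m := normc (P i j) ^+ 2.
  transitivity (complex.Re (x * x * p + 2 * x * y * m + y * y * m * r)%:C%C); first by [].
  congr complex.Re; rewrite !rmorphD !(rmorphXn, rmorphM) rmorph_nat /=.
  by rewrite normcE normCK; ring.
by case/complex_ge0E: (P_psd v).
Qed.

End Psd.

Definition in_basis d (U A : 'M[C]_d) := adjmx U *m A *m U.

Section InBasis.
Variables (d : nat) (U : 'M[C]_d).

Lemma in_basis_herm A : adjmx A = A -> adjmx (in_basis U A) = in_basis U A.
Proof. by move=> herm; rewrite !adjmxM adjmxK herm mulmxA. Qed.

Lemma in_basis_psd A : psdmx A -> psdmx (in_basis U A).
Proof. by move=> psd v; rewrite !mulmxA -adjmxM -mulmxA. Qed.

Lemma in_basis_state A : U \is unitarymx -> is_state A -> is_state (in_basis U A).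
Proof.
move=> U_unitary [herm psd tr1]; split; [exact: in_basis_herm | exact: in_basis_psd |].
by rewrite mxtrace_mulC mulmxA (unitarymxP U_unitary) mul1mx.
Qed.

Lemma in_basis_sum I (r : seq I) (P : pred I) (A : I -> 'M[C]_d) :
  in_basis U (\sum_(i <- r | P i) A i) = \sum_(i <- r | P i) in_basis U (A i).
Proof. by rewrite /in_basis mulmx_sumr mulmx_suml. Qed.

Lemma in_basisZ a A : in_basis U (a *: A) = a *: in_basis U A.
Proof. by rewrite /in_basis -scalemxAr -scalemxAl. Qed.

Lemma mxtrace_in_basis A i j :
  \tr (A *m (col j U *m adjmx (col i U))) = in_basis U A i j.
Proof.
rewrite mulmxA mxtrace_mulC mulmxA trace_mx11 /adjmx tr_col map_row.
by rewrite -row_mul !mxE; apply: eq_bigr => k _; rewrite !mxE.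
Qed.

End InBasis.

Lemma state_sum_Re_diag d (P : 'M[C]_d) : is_state P -> \sum_i complex.Re (P i i) = 1.
Proof. by case=> _ _ tr1; rewrite -Re_sum -[\sum_i _]/(\tr P) tr1. Qed.

Lemma Re_in_basis_mean d T (U : 'M[C]_d) (A : 'I_T -> 'M[C]_d) i :
  complex.Re (in_basis U (T%:R^-1 *: \sum_t A t) i i)
    = T%:R^-1 * \sum_t complex.Re (in_basis U (A t) i i).
Proof.
rewrite in_basisZ in_basis_sum mxE summxE -Re_sum -Re_realM.
by rewrite fmorphV rmorph_nat.
Qed.

Section Expectation.
Variables (d T : nat).
Implicit Types (vr Y Z : top R d T) (x y : tidx d T).

Lemma eq_expect vr Y Z : (forall x y, Y x y = Z x y) -> expect vr Y = expect vr Z.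
Proof. by move=> eqY; apply: eq_bigr => x _; apply: eq_bigr => y _; rewrite eqY. Qed.

Lemma expectZ vr (a : C) Y : expect vr (fun x y => a * Y x y) = a * expect vr Y.
Proof.
rewrite /expect mulr_sumr; apply: eq_bigr => x _; rewrite mulr_sumr.
by apply: eq_bigr => y _; rewrite mulrCA.
Qed.

Lemma expectB vr Y Z :
  expect vr (fun x y => Y x y - Z x y) = expect vr Y - expect vr Z.
Proof.
rewrite /expect -sumrB; apply: eq_bigr => x _; rewrite -sumrB.
by apply: eq_bigr => y _; rewrite mulrBr.
Qed.

Lemma expect_sum vr I (r : seq I) (P : pred I) (F : I -> top R d T) :
  expect vr (fun x y => \sum_(i <- r | P i) F i x y) = \sum_(i <- r | P i) expect vr (F i).
Proof.
rewrite /expect [RHS]exchange_big; apply: eq_bigr => x _ /=.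
rewrite [RHS]exchange_big; apply: eq_bigr => y _ /=; exact: mulr_sumr.
Qed.

Lemma expect_tensor (rho G : 'I_T -> 'M[C]_d) :
  expect (tensor_state rho) (tensor_state G) = \prod_t \tr (rho t *m G t).
Proof.
transitivity (\sum_(x : tidx d T) \sum_(y : tidx d T)
                \prod_t (rho t (x t) (y t) * G t (y t) (x t))).
  by apply: eq_bigr => x _; apply: eq_bigr => y _; rewrite big_split.
transitivity (\sum_(x : tidx d T) \prod_t \sum_b rho t (x t) b * G t b (x t)).
  by apply: eq_bigr => x _; rewrite bigA_distr_bigA.
rewrite bigA_distr_bigA; apply: eq_bigr => t _.
by apply: eq_bigr => a _; rewrite mxE.
Qed.

Lemma prod_id_mx_entries (P : pred 'I_T) x y :
  \prod_(t | P t) (1%:M : 'M[C]_d) (x t) (y t)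
    = if [forall t, P t ==> (x t == y t)] then 1 else 0.
Proof.
case: ifP => [/forallP eq_xy | /negbT /forallPn [t]].
  by apply: big1 => t Pt; rewrite mxE (eqP (implyP (eq_xy t) Pt)) eqxx.
by rewrite negb_imply => /andP [Pt neq_t]; rewrite (bigD1 t) //= mxE (negbTE neq_t) mul0r.
Qed.

Lemma idop_tensor x y : idop R x y = tensor_state (fun _ => 1%:M : 'M[C]_d) x y.
Proof.
rewrite /idop /tensor_state prod_id_mx_entries; congr (if _ then _ else _).
apply/eqP/forallP => [-> t | eq_xy]; first by rewrite eqxx.
by apply/ffunP => t; apply/eqP; exact: eq_xy.
Qed.

Lemma expect_idop (rho : 'I_T -> 'M[C]_d) :
  (forall t, \tr (rho t) = 1) -> expect (tensor_state rho) (@idop R d T) = 1.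
Proof.
move=> tr1; rewrite (eq_expect _ idop_tensor) expect_tensor.
by apply: big1 => t _; rewrite mulmx1.
Qed.

End Expectation.

Definition bures_form d (U : 'M[C]_d) (q : 'I_d -> R) (A B : 'M[C]_d) : C :=
  \sum_i \sum_j (bures_weight q i j)%:C%C * (in_basis U A i j * in_basis U B j i).

Definition bures_norm d (U : 'M[C]_d) (q : 'I_d -> R) (A : 'M[C]_d) : R :=
  \sum_i \sum_j bures_weight q i j * normc (in_basis U A i j) ^+ 2.

Section BuresForm.
Variables (d : nat) (U : 'M[C]_d) (q : 'I_d -> R).

Lemma chi2_divE A : chi2_div U q A = bures_norm U q A - 1.
Proof. by []. Qed.

Lemma bures_formC A B : bures_form U q A B = bures_form U q B A.
Proof.
rewrite /bures_form exchange_big; apply: eq_bigr => i _; apply: eq_bigr => j _ /=.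
by rewrite bures_weightC [in_basis U A _ _ * _]mulrC.
Qed.

Lemma bures_formZ a b A B :
  bures_form U q (a *: A) (b *: B) = a * b * bures_form U q A B.
Proof.
rewrite /bures_form mulr_sumr; apply: eq_bigr => i _; rewrite mulr_sumr.
by apply: eq_bigr => j _; rewrite !in_basisZ !mxE; ring.
Qed.

Lemma bures_form_sum I J (A : I -> 'M[C]_d) (B : J -> 'M[C]_d) (r : seq I) (r' : seq J) :
  bures_form U q (\sum_(k <- r) A k) (\sum_(l <- r') B l)
    = \sum_(k <- r) \sum_(l <- r') bures_form U q (A k) (B l).
Proof.
rewrite /bures_form !in_basis_sum.
transitivity (\sum_i \sum_j \sum_(k <- r) \sum_(l <- r')
    (bures_weight q i j)%:C%C * (in_basis U (A k) i j * in_basis U (B l) j i)).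
  apply: eq_bigr => i _; apply: eq_bigr => j _; rewrite !summxE big_distrlr mulr_sumr.
  by apply: eq_bigr => k _; rewrite mulr_sumr.
under eq_bigr do rewrite exchange_big; rewrite exchange_big; apply: eq_bigr => k _.
by under eq_bigr do rewrite exchange_big; rewrite exchange_big.
Qed.

Lemma bures_form_self A : adjmx A = A -> bures_form U q A A = (bures_norm U q A)%:C%C.
Proof.
move=> herm; rewrite /bures_form /bures_norm rmorph_sum; apply: eq_bigr => i _.
rewrite rmorph_sum; apply: eq_bigr => j _.
have -> : in_basis U A j i = (in_basis U A i j)^*.
  by rewrite -{1}(in_basis_herm U herm) adjmxE.
by rewrite -normc_sqrE -rmorphM.
Qed.

End BuresForm.

Section BuresNormBounds.
Variables (d : nat) (U : 'M[C]_d) (q : 'I_d -> R).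
Hypothesis q_gt0 : forall i, 0 < q i.

Lemma bures_norm_ge_diag A :
  \sum_i complex.Re (in_basis U A i i) ^+ 2 / q i <= bures_norm U q A.
Proof.
apply: ler_sum => i _; rewrite (bigD1 i) //= -[leLHS]addr0.
apply: lerD; last by apply: sumr_ge0 => j _; rewrite mulr_ge0 ?bures_weight_ge0 ?sqr_ge0.
rewrite bures_weight_diag // mulrC; apply: ler_wpM2l; first by rewrite invr_ge0 ltW.
by rewrite normc2 lerDl sqr_ge0.
Qed.

Lemma bures_norm_le_state A : U \is unitarymx -> is_state A ->
  bures_norm U q A <= \sum_i complex.Re (in_basis U A i i) / q i.
Proof.
move=> U_unitary A_state; have P_state := in_basis_state U_unitary A_state.
apply: sum_bures_weight_le (state_sum_Re_diag P_state) _ => // i j.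
by case: P_state => herm psd _; rewrite sqr_ge0 psdmx_minor.
Qed.

End BuresNormBounds.

Definition swap_factor d T (U : 'M[C]_d) (s t : 'I_T) (i j : 'I_d) (r : 'I_T) : 'M[C]_d :=
  if r == s then col j U *m adjmx (col i U)
  else if r == t then col i U *m adjmx (col j U) else 1%:M.

Section PairOperator.
Variables (d T : nat) (U : 'M[C]_d) (q : 'I_d -> R) (s t : 'I_T).
Hypothesis neq_st : s != t.

Let neq_ts : (t == s) = false. Proof. by rewrite eq_sym (negbTE neq_st). Qed.

Lemma CstE x y :
  Cst U q s t x y
    = \sum_i \sum_j (bures_weight q i j)%:C%C * tensor_state (swap_factor U s t i j) x y.
Proof.
rewrite /Cst /Cop2 /tensor_state -prod_id_mx_entries mulr_suml; apply: eq_bigr => i _.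
rewrite mulr_suml; apply: eq_bigr => j _.
rewrite [in RHS](bigD1 s) //= [in RHS](bigD1 t) /=; last by rewrite eq_sym.
rewrite [in RHS](eq_bigr (fun r => (1%:M : 'M[C]_d) (x r) (y r))); last first.
  by move=> r /andP [/negbTE rs /negbTE rt]; rewrite /swap_factor rs rt.
rewrite /swap_factor eqxx neq_ts eqxx !mxE !big_ord1 !mxE.
rewrite /bures_weight -[2 / _]invf_div fmorphV; ring.
Qed.

Lemma expect_Cst (rho : 'I_T -> 'M[C]_d) : (forall r, \tr (rho r) = 1) ->
  expect (tensor_state rho) (Cst U q s t) = bures_form U q (rho s) (rho t).
Proof.
move=> tr1; rewrite (eq_expect _ CstE) expect_sum; apply: eq_bigr => i _.
rewrite expect_sum; apply: eq_bigr => j _; rewrite expectZ expect_tensor.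
rewrite (bigD1 s) // (bigD1 t) /=; last by rewrite eq_sym.
rewrite big1 => [|r /andP [/negbTE rs /negbTE rt]]; last by rewrite /swap_factor rs rt mulmx1.
by rewrite mulr1 /swap_factor eqxx neq_ts eqxx !mxtrace_in_basis.
Qed.

End PairOperator.

Lemma expect_Mop d T (U : 'M[C]_d) (q : 'I_d -> R) (vr : top R d T) :
  expect vr (Mop U q) = (T%:R - 1) / T%:R *
    (('C(T, 2))%:R^-1 * (\sum_(s < T) \sum_(t < T | (s < t)%N) expect vr (Cst U q s t))
     - expect vr (@idop R d T)).
Proof.
rewrite /Mop expectZ expectB expectZ expect_sum.
by under eq_bigr do rewrite expect_sum.
Qed.

Lemma expect_Mop_sub_chi2 d T (U : 'M[C]_d) (q : 'I_d -> R) (rho : 'I_T -> 'M[C]_d) :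
  (2 <= T)%N -> (forall t, adjmx (rho t) = rho t) -> (forall t, \tr (rho t) = 1) ->
  expect (tensor_state rho) (Mop U q) - (chi2_div U q (T%:R^-1 *: \sum_t rho t))%:C%C
    = (T%:R^-1 - (\sum_t bures_norm U q (rho t)) / T%:R ^+ 2)%:C%C.
Proof.
move=> T_ge2 herm tr1; set rhobar := T%:R^-1 *: \sum_t rho t.
set S := \sum_(s < T) \sum_(t < T | (s < t)%N) bures_form U q (rho s) (rho t).
have ES : expect (tensor_state rho) (Mop U q) = (T%:R - 1) / T%:R * (('C(T, 2))%:R^-1 * S - 1).
  rewrite expect_Mop expect_idop //; congr (_ * (_ * _ - _)).
  apply: eq_bigr => s _; apply: eq_bigr => t lt_st; apply: expect_Cst => //.
  by rewrite -val_eqE /= ltn_eqF.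
have S2 : S *+ 2 = T%:R ^+ 2 * (bures_norm U q rhobar)%:C%C
                   - (\sum_t bures_norm U q (rho t))%:C%C.
  rewrite sum_ltn_pairs => [|s t]; last exact: bures_formC.
  have T_neq0 : T%:R != 0 :> C by rewrite pnatr_eq0 -lt0n (leq_trans _ T_ge2).
  have sum_rho : \sum_t rho t = T%:R *: rhobar by rewrite scalerA mulfV ?scale1r.
  rewrite -bures_form_sum sum_rho bures_formZ bures_form_self ?adjmx_mean // -expr2.
  by congr (_ - _); rewrite rmorph_sum; apply: eq_bigr => t _; rewrite bures_form_self.
rewrite ES (pair_average_coef T_ge2 S2) chi2_divE.
rewrite !(rmorphB, rmorphM, fmorphV, rmorphXn, rmorph_nat, rmorph1) /=.
by rewrite addrAC subrr add0r.
Qed.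

Section Spectral.
Variables (d : nat) (sigma U : 'M[C]_d) (q : 'I_d -> R).
Hypotheses (U_unitary : U \is unitarymx)
  (sigmaE : sigma = \sum_i (q i)%:C%C *: (col i U *m adjmx (col i U))).

Lemma adjmx_col_mul_col k i : adjmx (col k U) *m col i U = (k == i)%:R%:M.
Proof.
apply/matrixP => a b; rewrite !ord1.
have := congr1 (fun M : 'M[C]_d => M k i) (unitary_adjmxK U_unitary).
by rewrite !mxE => <-; apply: eq_bigr => l _; rewrite !mxE.
Qed.

Lemma spectral_col k : sigma *m col k U = (q k)%:C%C *: col k U.
Proof.
rewrite sigmaE mulmx_suml (bigD1 k) //= big1 => [|i /negbTE neq_ik].
  by rewrite addr0 -scalemxAl -mulmxA adjmx_col_mul_col eqxx mul_mx_scalar scale1r.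
by rewrite -scalemxAl -mulmxA adjmx_col_mul_col neq_ik mul_mx_scalar !scale0r scaler0.
Qed.

Lemma spectral_gt0 : is_state sigma -> \rank sigma = d -> forall k, 0 < q k.
Proof.
case=> [_ psd _] rk k; have qk_ge0 : 0 <= q k.
  have := psd (col k U); rewrite -mulmxA spectral_col -scalemxAr adjmx_col_mul_col eqxx.
  by rewrite !mxE eqxx mulr1 ler0c.
rewrite lt0r qk_ge0 andbT; apply/eqP => qk0.
have sigma_unit : sigma \in unitmx by rewrite -row_full_unit /row_full rk.
have colk0 : col k U = 0.
  by rewrite -(mulKmx sigma_unit (col k U)) spectral_col qk0 scale0r mulmx0.
have := adjmx_col_mul_col k k; rewrite colk0 mulmx0 eqxx => /matrixP /(_ 0 0).
by rewrite !mxE eqxx => /eqP; rewrite eq_sym oner_eq0.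
Qed.

Lemma spectral_sum : is_state sigma -> \sum_i q i = 1.
Proof.
case=> [_ _ tr1]; apply: complexI; rewrite rmorph_sum rmorph1 -tr1 sigmaE raddf_sum.
apply: eq_bigr => i _ /=; rewrite mxtraceZ mxtrace_mulC adjmx_col_mul_col eqxx.
by rewrite mxtrace_scalar mulr1.
Qed.

End Spectral.

End Quantum.

Theorem proposition8p6 (R : realType) (d T : nat)
  (sigma : 'M[R[i]]_d) (U : 'M[R[i]]_d) (q : 'I_d -> R) (gamma : R)
  (rho : 'I_T -> 'M[R[i]]_d) :
  is_state sigma ->
  \rank sigma = d ->
  U \is unitarymx ->
  sigma = \sum_(i < d) ((q i)%:C)%C *: (col i U *m adjmx (col i U)) ->
  (exists i, gamma = q i) -> (forall i, gamma <= q i) ->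
  (2 <= T)%N ->
  (forall t, is_state (rho t)) ->
  let varrho := tensor_state rho in
  let rhobar := (T%:R)^-1 *: \sum_(t < T) rho t in
  let mu := chi2_div U q rhobar in
  ComplexField.Normc.normc (expect varrho (Mop U q) - (mu%:C)%C)
    <= Num.sqrt (d%:R / (gamma * T%:R)) * Num.sqrt mu + (d%:R - 1) / T%:R.
Proof.
move=> sigma_state rk U_unitary sigmaE [i0 gammaE] gamma_le T_ge2 rho_state /=.
have q_gt0 := spectral_gt0 U_unitary sigmaE sigma_state rk.
have gamma_gt0 : 0 < gamma by rewrite gammaE.
have herm t : adjmx (rho t) = rho t by case: (rho_state t).
have tr1 t : \tr (rho t) = 1 by case: (rho_state t).
rewrite expect_Mop_sub_chi2 // normc_real.
apply: (mean_deviation_bound gamma_gt0 gamma_le (spectral_sum U_unitary sigmaE sigma_state)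
          (D := fun t i => complex.Re (in_basis U (rho t) i i))) => [|t|t|t|].
- exact: leq_trans T_ge2.
- exact/state_sum_Re_diag/in_basis_state.
- exact: bures_norm_ge_diag.
- exact: bures_norm_le_state.
- rewrite chi2_divE subrK /=; under eq_bigr => i _ do rewrite -(Re_in_basis_mean U rho i).
  exact: bures_norm_ge_diag.
Qed.
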